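(* Let $G$ be a graph and $x$ an arbitrary vertex of $G$. Then there exists a Grundy dominating sequence of $G$ that contains $x$.
   Context: For a graph $G$, $N[v]$ denotes the closed neighborhood of $v$. A sequence $(v_1,\ldots,v_k)$ of distinct vertices is a closed neighborhood sequence if $N[v_i]\setminus\bigcup_{j=1}^{i-1}N[v_j]\neq\emptyset$ for each $i\in[k]$. A Grundy dominating sequence is a closed neighborhood sequence of maximum possible length in $G$. *)

From mathcomp Require Import all_boot.
Set Implicit Arguments. Unset Strict Implicit. Unset Printing Implicit Defensive.

Definition simple_graph (T : finType) (e : rel T) : Prop :=
  symmetric e /\ irreflexive e.

Definition cnbh (T : finType) (e : rel T) (v : T) : {set T} :=
  [set u | (u == v) || e v u].

Definition cn_sequence (T : finType) (e : rel T) (s : seq T) : Prop :=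
  uniq s /\
  forall i : nat, i < size s ->
    forall x0 : T,
      cnbh e (nth x0 s i) :\: \bigcup_(v <- take i s) cnbh e v != set0.

Definition grundy_dominating_sequence (T : finType) (e : rel T) (s : seq T) : Prop :=
  cn_sequence e s /\ forall t : seq T, cn_sequence e t -> size t <= size s.

(* Take a Grundy dominating sequence S avoiding x. Maximality forces S to
   dominate N[x], so some entry v of S is the first one after which N[x] is
   dominated. Replacing v by x keeps every later entry legal, since the
   prefix up to x dominates no less than the prefix up to v did; the result is
   a closed neighborhood sequence of the same, maximum, length containing x. *)
From mathcomp Require Import all_boot.
From Stdlib Require Import Classical.
Set Implicit Arguments. Unset Strict Implicit. Unset Printing Implicit Defensive.

Lemma ex_maximal (A : Type) (P : A -> Prop) (f : A -> nat) (n : nat) :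
  (exists a, P a) -> (forall a, P a -> f a <= n) ->
  exists a, P a /\ forall b, P b -> f b <= f a.
Proof.
move=> [a0 Pa0] bounded; apply: NNPP => no_max.
have grow k : exists a, P a /\ k <= f a.
  elim: k => [|k [a [Pa le_ka]]]; first by exists a0.
  have [b not_le_ba] := not_all_ex_not _ _ (fun H => no_max (ex_intro _ a (conj Pa H))).
  have [Pb /negP] := imply_to_and _ _ not_le_ba.
  by rewrite -ltnNge => lt_ab; exists b; split=> //; apply: leq_ltn_trans lt_ab.
have [a [Pa]] := grow n.+1.
by rewrite ltnNge bounded.
Qed.

Section ClosedNeighborhoodSequences.
Variables (T : finType) (e : rel T).

Definition dominated (s : seq T) : {set T} := \bigcup_(v <- s) cnbh e v.

Lemma dominated_cat s1 s2 : dominated (s1 ++ s2) = dominated s1 :|: dominated s2.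
Proof. by rewrite /dominated big_cat. Qed.

Lemma dominated_cons v s : dominated (v :: s) = cnbh e v :|: dominated s.
Proof. by rewrite /dominated big_cons. Qed.

Lemma dominated_rcons s v : dominated (rcons s v) = dominated s :|: cnbh e v.
Proof. by rewrite -cats1 dominated_cat dominated_cons /dominated big_nil setU0. Qed.

Lemma dominated_nil : dominated [::] = set0.
Proof. by rewrite /dominated big_nil. Qed.

Lemma cnbh_refl v : v \in cnbh e v.
Proof. by rewrite inE eqxx. Qed.

Lemma cnbh_sub_dominated v s : v \in s -> cnbh e v \subset dominated s.
Proof. by move=> vs; rewrite /dominated bigcup_seq; apply: bigcup_sup. Qed.

Lemma cn_sequence_nil : cn_sequence e [::].
Proof. by []. Qed.

Lemma cn_sequence_rcons s v :
  cn_sequence e (rcons s v) <->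
  [/\ cn_sequence e s, v \notin s & ~~ (cnbh e v \subset dominated s)].
Proof.
have take_rcons i : i <= size s -> take i (rcons s v) = take i s.
  by move=> le_is; rewrite -cats1 takel_cat.
rewrite /cn_sequence rcons_uniq size_rcons.
split=> [[/andP [vNs uniq_s] fresh] | [[uniq_s fresh] vNs new_v]].
- split=> //; last first.
    have := fresh _ (ltnSn (size s)) v.
    by rewrite nth_rcons ltnn eqxx take_rcons // take_size setD_eq0 -/(dominated s).
  split=> // i lt_is x0; have := fresh i (leqW lt_is) x0.
  by rewrite nth_rcons lt_is (take_rcons _ (ltnW lt_is)).
- split=> [|i]; first by rewrite vNs.
  rewrite ltnS leq_eqVlt => /orP [/eqP -> | lt_is] x0.
    by rewrite nth_rcons ltnn eqxx take_rcons // take_size setD_eq0 -/(dominated s).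
  by rewrite nth_rcons lt_is (take_rcons _ (ltnW lt_is)); apply: fresh.
Qed.

Lemma cn_sequence_size s : cn_sequence e s -> size s <= #|T|.
Proof. by case=> /card_uniqP <- _; apply: max_card. Qed.

Lemma grundy_dominating_sequence_exists :
  exists s, grundy_dominating_sequence e s.
Proof. exact: ex_maximal (ex_intro _ _ cn_sequence_nil) cn_sequence_size. Qed.

Lemma grundy_dominating s x :
  grundy_dominating_sequence e s -> cnbh e x \subset dominated s.
Proof.
move=> [cn_s longest]; case: (boolP (x \in s)) => [|xNs]; first exact: cnbh_sub_dominated.
apply: contraT => new_x.
have /longest : cn_sequence e (rcons s x) by apply/cn_sequence_rcons.
by rewrite size_rcons ltnn.
Qed.

Lemma first_dominating_prefix (A : {set T}) s :
  A != set0 -> A \subset dominated s ->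
  exists a v b, [/\ s = a ++ v :: b, ~~ (A \subset dominated a)
                  & A \subset dominated (rcons a v)].
Proof.
move=> A_neq0; elim/last_ind: s => [|s w IH].
  by rewrite dominated_nil subset0 (negPf A_neq0).
case: (boolP (A \subset dominated s)) => [/IH [a [v [b [-> not_a a_v]]]] _ | not_s].
  by exists a, v, (rcons b w); rewrite rcons_cat.
by exists s, w, [::]; rewrite cats1.
Qed.

Lemma cn_sequence_exchange a v b x :
  cnbh e x \subset dominated (rcons a v) -> ~~ (cnbh e x \subset dominated a) ->
  x \notin a ++ v :: b ->
  cn_sequence e (a ++ v :: b) -> cn_sequence e (a ++ x :: b).
Proof.
move=> x_by_v new_x; elim/last_ind: b => [|b w IH].
  rewrite !cats1 => _ /cn_sequence_rcons[cn_a _ _]; apply/cn_sequence_rcons.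
  by split=> //; apply: contra (@cnbh_sub_dominated x a) new_x.
rewrite -!rcons_cons -!rcons_cat mem_rcons inE negb_or => /andP [xNw xNs].
move=> /cn_sequence_rcons-[cn_s wNs new_w]; apply/cn_sequence_rcons; split.
- exact: IH.
- move: wNs; rewrite !mem_cat !inE [w == x]eq_sym (negPf xNw).
  by apply: contra => /or3P [->|//|->]; rewrite ?orbT.
- move: new_w; apply: contra => /subset_trans; apply.
  rewrite !dominated_cat !dominated_cons !setUA; apply: setSU.
  by rewrite -(dominated_rcons a v) subUset x_by_v andbT dominated_rcons subsetUl.
Qed.

End ClosedNeighborhoodSequences.

Theorem proposition4p1 (T : finType) (e : rel T) (x : T) :
  simple_graph e ->
  exists s : seq T, grundy_dominating_sequence e s /\ x \in s.
Proof.
move=> _.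
have [s gds_s] := grundy_dominating_sequence_exists e.
case: (boolP (x \in s)) => xNs; first by exists s.
have x_dominated := grundy_dominating x gds_s.
have nbh_x_neq0 : cnbh e x != set0 by apply/set0Pn; exists x; apply: cnbh_refl.
have [a [v [b [def_s new_x x_by_v]]]] := first_dominating_prefix nbh_x_neq0 x_dominated.
case: gds_s => cn_s longest.
exists (a ++ x :: b); split; last by rewrite mem_cat mem_head orbT.
split; first by apply: cn_sequence_exchange x_by_v new_x _ _; rewrite -def_s.
by move=> t /longest; rewrite def_s !size_cat.
Qed.
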